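(* Let $\mathcal P\subseteq 2^{[n]}$ be a nonempty intersection-closed family. Let $\mathcal F(\Delta_{\mathcal P})$ be the labeled cellular chain complex of free $S$-modules supported on the order complex $\Delta_{\mathcal P}$, where each vertex $A\in\mathcal P$ is labeled by $m(A,A)$, each face is labeled by the lcm of the labels of its vertices, and the empty face is labeled by $1$. Explicitly, $F_i=\bigoplus_{\sigma} S\,e_\sigma$ over $i$-faces $\sigma$ of $\Delta_{\mathcal P}$ (for $i\ge -1$, with $F_{-1}=S$), $e_\sigma$ of multidegree $m_\sigma$ (the label of $\sigma$), and for $\sigma=\{C_0<\dots<C_i\}$, $\partial(e_\sigma)=\sum_{j=0}^{i}(-1)^j\frac{m_\sigma}{m_{\sigma\setminus\{C_j\}}}e_{\sigma\setminus\{C_j\}}$. Then $\mathcal F(\Delta_{\mathcal P})$ is acyclic, and hence is a (multigraded) $S$-free resolution of $S/I^\star_{\mathtt C(\mathcal P)}$.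
   Context: For $n\in\mathbb N$ let $[n]=\{0,\dots,n-1\}$. Fix a field $\Bbbk$ and let $S=\Bbbk[x_{(i,b)}: i\in[n], b\in\{0,1\}]$. For a family $\mathcal P\subseteq 2^{[n]}$ (partially ordered by inclusion), $\mathtt C(\mathcal P)=\{\mathbf 1_A: A\in\mathcal P\}$ is the associated class of indicator functions $[n]\to\{0,1\}$. $\mathcal P$ is intersection-closed if $A,B\in\mathcal P\Rightarrow A\cap B\in\mathcal P$. For a function class $\mathtt C$, $I^\star_{\mathtt C}=\langle\prod_{i\in[n]}x_{(i,1-f(i))}: f\in\mathtt C\rangle\subseteq S$. For $A\subseteq B\subseteq[n]$, $m(A,B):=\prod_{i\in A}x_{(i,0)}\prod_{i\notin B}x_{(i,1)}\prod_{i\in B\setminus A}x_{(i,0)}x_{(i,1)}$; in particular $I^\star_{\mathtt C(\mathcal P)}=\langle m(A,A):A\in\mathcal P\rangle$. The order complex $\Delta_{\mathcal P}$ is the simplicial complex whose $i$-faces are the chains $C_0<C_1<\dots<C_i$ in $\mathcal P$. *)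

From HB Require Import structures.
From mathcomp Require Import all_boot all_order all_algebra.
Set Implicit Arguments. Unset Strict Implicit. Unset Printing Implicit Defensive.
Import GRing.Theory.
Local Open Scope ring_scope.

(* Variables x_(i,b) of S = k[x_(i,b) : i in [n], b in {0,1}] are indexed by
   'I_n * bool (false = 0, true = 1).  A monomial of S is its exponent vector. *)
Definition mono (n : nat) := {ffun 'I_n * bool -> nat}.

Definition mono1 (n : nat) : mono n := [ffun _ => 0%N].
Definition mono_lcm n (u v : mono n) : mono n := [ffun x => maxn (u x) (v x)].
Definition mono_dvd n (u v : mono n) : bool := [forall x, (u x <= v x)%N].
(* v / u (meaningful when u divides v) *)
Definition mono_div n (v u : mono n) : mono n := [ffun x => (v x - u x)%N].

(* m(A,B) = prod_{i in A} x_(i,0) prod_{i notin B} x_(i,1)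
            prod_{i in B\A} x_(i,0) x_(i,1) *)
Definition mAB n (A B : {set 'I_n}) : mono n :=
  [ffun x => let: (i, b) := x in
     if ~~ b then ((i \in A) || (i \in B :\: A) : nat)
     else ((i \notin B) || (i \in B :\: A) : nat)].

Definition vlabel n (A : {set 'I_n}) : mono n := mAB A A.

Definition intersection_closed n (P : {set {set 'I_n}}) : Prop :=
  forall A B, A \in P -> B \in P -> A :&: B \in P.

(* faces of the order complex Delta_P: chains of P (empty chain included);
   a face with i+1 elements is an i-face *)
Definition isFace n (P : {set {set 'I_n}}) (s : {set {set 'I_n}}) : bool :=
  (s \subset P) && [forall A in s, forall B in s, (A \subset B) || (B \subset A)].

Definition flabel n (s : {set {set 'I_n}}) : mono n :=
  \big[@mono_lcm n/mono1 n]_(A in s) vlabel A.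

(* Elements of the whole labeled complex: coefficient functions
   c sigma u = coefficient of u * e_sigma  (u a monomial of S). *)
Definition chain (k : fieldType) n := {set {set 'I_n}} -> mono n -> k.

Definition inF (k : fieldType) n (P : {set {set 'I_n}}) (i : nat) (c : chain k n)
  : Prop :=
  (forall s u, c s u != 0 -> isFace P s && (#|s| == i.+1)%N) /\
  (exists l : seq ({set {set 'I_n}} * mono n),
      forall s u, c s u != 0 -> (s, u) \in l).

(* For sigma = {C_0 < ... < C_i} and C = C_j, the sign
   is (-1)^j with j = #{D in sigma | D proper subset of C}.  By S-linearity,
   d(u e_sigma) = sum_j (-1)^j u (m_sigma / m_{sigma \ C_j}) e_{sigma \ C_j};
   so the coefficient of w e_tau in d c is the sum, over the C in P \ tau with
   sigma = C |: tau a face, of (-1)^j c sigma (w / q) where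
   q = m_sigma / m_tau, provided q divides w. *)
Definition bd (k : fieldType) n (P : {set {set 'I_n}}) (c : chain k n) : chain k n :=
  fun t w =>
    if isFace P t then
      \sum_(C : {set 'I_n} | (C \in P) && (C \notin t) && isFace P (C |: t))
        let q := mono_div (flabel (C |: t)) (flabel t) in
        (-1) ^+ #|[set D in t | D \proper C]| *
        (if mono_dvd q w then c (C |: t) (mono_div w q) else 0)
    else 0.

From HB Require Import structures.
From mathcomp Require Import all_boot all_order all_algebra.
From mathcomp Require Import zify.
Import GRing.Theory.
Local Open Scope ring_scope.
Set Implicit Arguments. Unset Strict Implicit. Unset Printing Implicit Defensive.

(* The complex F(Delta_P) is multigraded and the differential preserves the
   multidegree: the coefficient of w e_t in d c only involves coefficients of
   c of the same multidegree D = w * m_t.  We prove exactness one multidegree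
   at a time by an explicit contracting homotopy.
   For a monomial D, the vertices of P whose label divides D form the family
   Q_D; since m(A \cap B) divides lcm(m(A), m(B)) and P is intersection-closed,
   Q_D is intersection-closed, so it has a least element M_D (the intersection
   of all its members).  The faces with label dividing D are the chains of Q_D,
   and they form a cone with apex M_D.  Coning off, e_s |-> +/- e_{M_D |: s},
   gives a chain h c with d (h c) = c whenever c is a cycle, which is the
   required preimage. *)

Definition madd n (u v : mono n) : mono n := [ffun x => (u x + v x)%N].

Section MonomialArithmetic.
Variable n : nat.
Implicit Types w a b D : mono n.

Lemma dvd_madd w b : mono_dvd b (madd w b).
Proof. by apply/forallP => x; rewrite !ffunE leq_addl. Qed.

Lemma div_maddK w b : mono_div (madd w b) b = w.
Proof. by apply/ffunP => x; rewrite !ffunE addnK. Qed.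

Lemma madd_divK D b : mono_dvd b D -> madd (mono_div D b) b = D.
Proof.
move=> /forallP H; apply/ffunP => x; have := H x; rewrite !ffunE.
by move: (D x) (b x) => ? ?; lia.
Qed.

Lemma dvd_div_madd a b w : mono_dvd (mono_div a b) w = mono_dvd a (madd w b).
Proof.
by apply/forallP/forallP => H x; move: (H x); rewrite !ffunE;
  move: (a x) (b x) (w x) => ? ? ?; lia.
Qed.

Lemma div_div a b w : (forall x, b x <= a x)%N -> mono_dvd (mono_div a b) w ->
  mono_div w (mono_div a b) = mono_div (madd w b) a.
Proof.
move=> ba /forallP H; apply/ffunP => x.
have := ba x; have := H x; rewrite !ffunE.
by move: (a x) (b x) (w x) => ? ? ?; lia.
Qed.

End MonomialArithmetic.

Definition Rset n (D : mono n) : {set {set 'I_n}} := [set A | mono_dvd (vlabel A) D].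
Definition Qset n (P : {set {set 'I_n}}) (D : mono n) := P :&: Rset D.

Section Labels.
Variable n : nat.
Implicit Types (A B : {set 'I_n}) (s t : {set {set 'I_n}}) (D : mono n).

Lemma vlabelE A j b : vlabel A (j, b) = (if b then j \notin A else j \in A) :> nat.
Proof. by rewrite /vlabel /mAB ffunE setDv !inE !orbF; case: b. Qed.

Lemma flabelE s x : flabel s x = (\max_(A in s) vlabel A x)%N.
Proof.
rewrite /flabel; apply: (big_morph (fun f : mono n => f x) (id1 := 0%N) (op1 := maxn)).
  by move=> u v; rewrite ffunE.
by rewrite ffunE.
Qed.

Lemma flabel_dvd s D : mono_dvd (flabel s) D = (s \subset Rset D).
Proof.
apply/forallP/subsetP => [H A As | H x].
  by rewrite inE; apply/forallP => x; have := H x; rewrite flabelE => /bigmax_leqP; apply.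
rewrite flabelE; apply/bigmax_leqP => A As.
by have := H A As; rewrite inE => /forallP; apply.
Qed.

Lemma flabel_mono s t : s \subset t -> forall x, (flabel s x <= flabel t x)%N.
Proof.
move=> st x; rewrite !flabelE; apply/bigmax_leqP => A As.
by apply: (leq_bigmax_cond (P := mem t)); apply: (subsetP st).
Qed.

Lemma face_dvd_degree t w : t \subset Rset (madd w (flabel t)).
Proof. by rewrite -flabel_dvd dvd_madd. Qed.

(* m(A \cap B) divides lcm(m(A), m(B)), so Rset D is intersection-closed. *)
Lemma Rset_meet D A B : A \in Rset D -> B \in Rset D -> A :&: B \in Rset D.
Proof.
rewrite !inE => /forallP HA /forallP HB; apply/forallP => -[j b].
have := HA (j, b); have := HB (j, b); rewrite !vlabelE !inE.
by case: b; case: (j \in A); case: (j \in B) => /=; lia.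
Qed.

End Labels.

Lemma bigcap_mem (T : finType) (Q : {set {set T}}) A0 :
  A0 \in Q -> {in Q &, forall A B, A :&: B \in Q} -> \bigcap_(A in Q) A \in Q.
Proof.
move=> A0Q closedQ.
case: (arg_minnP (fun A : {set T} => #|A|) A0Q) => M MQ Mmin.
suff -> : \bigcap_(A in Q) A = M by [].
apply/eqP; rewrite eqEsubset bigcap_inf //=; apply/bigcapsP => B BQ.
apply/setIidPl/eqP; rewrite eqEcard subsetIl /=.
exact: Mmin (closedQ _ _ MQ BQ).
Qed.

Definition Mmin n (P : {set {set 'I_n}}) (D : mono n) := \bigcap_(A in Qset P D) A.

Lemma Mmin_sub n (P : {set {set 'I_n}}) D B : B \in Qset P D -> Mmin P D \subset B.
Proof. exact: bigcap_inf. Qed.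

Lemma Mmin_in n (P : {set {set 'I_n}}) D A0 : intersection_closed P ->
  A0 \in Qset P D -> Mmin P D \in Qset P D.
Proof.
move=> icP A0Q; apply: bigcap_mem A0Q _ => A B.
move=> /setIP[AP AR] /setIP[BP BR].
by apply/setIP; split; [exact: icP | exact: Rset_meet].
Qed.

Section Faces.
Variables (n : nat) (P : {set {set 'I_n}}).
Implicit Types (s t : {set {set 'I_n}}) (C M : {set 'I_n}).

Lemma faceP s :
  reflect (s \subset P /\ forall A B, A \in s -> B \in s -> (A \subset B) || (B \subset A))
          (isFace P s).
Proof.
apply: (iffP andP) => [[sP /forall_inP H]|[sP H]]; split=> //.
  by move=> A B As Bs; exact: (forall_inP (H A As) B Bs).
by apply/forall_inP => A As; apply/forall_inP => B Bs; exact: H.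
Qed.

Lemma face_sub s t : s \subset t -> isFace P t -> isFace P s.
Proof.
move=> st /faceP[tP H]; apply/faceP; split; first exact: subset_trans tP.
by move=> A B As Bs; apply: H; apply: (subsetP st).
Qed.

Lemma face_cone s M : M \in P -> (forall B, B \in s -> M \subset B) ->
  isFace P (M |: s) = isFace P s.
Proof.
move=> MP MB; apply/idP/idP; first by apply: face_sub; exact: subsetUr.
move=> /faceP[sP H]; apply/faceP; split; first by rewrite subUset sub1set MP.
move=> A B; rewrite !in_setU1 => /predU1P[->|As] /predU1P[->|Bs].
- by rewrite subxx.
- by rewrite MB.
- by rewrite MB // orbT.
- exact: H.
Qed.

End Faces.

Definition sgn (k : fieldType) n (t : {set {set 'I_n}}) (C : {set 'I_n}) : k :=
  (-1) ^+ #|[set A in t | A \proper C]|.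

Section Signs.
Variables (k : fieldType) (n : nat).
Implicit Types (t : {set {set 'I_n}}) (C M : {set 'I_n}).

(* The apex of a cone is its first vertex. *)
Lemma sgn_apex t M : (forall B, B \in t -> M \subset B) -> sgn k t M = 1.
Proof.
move=> MB; rewrite /sgn (_ : [set A in t | A \proper M] = set0) ?cards0 //.
apply/setP => A; rewrite !inE; case At: (A \in t) => //=.
by rewrite properE (MB _ At) andbF.
Qed.

(* Removing the apex M < C shifts the position of C by one. *)
Lemma sgn_remove_apex t M C : M \in t -> M \proper C -> sgn k t C = - sgn k (t :\ M) C.
Proof.
move=> Mt MC; rewrite /sgn (cardsD1 M) inE Mt MC add1n exprS mulN1r.
by congr (- _ ^+ _); apply: eq_card => B; rewrite !inE andbA.
Qed.

End Signs.

Definition coef (k : fieldType) n (c : chain k n) (s : {set {set 'I_n}}) (D : mono n) : k :=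
  c s (mono_div D (flabel s)).

Definition bdD (k : fieldType) n (P : {set {set 'I_n}}) (c : chain k n)
    (t : {set {set 'I_n}}) (D : mono n) : k :=
  \sum_(C | (C \in Qset P D) && (C \notin t) && isFace P (C |: t)) sgn k t C * coef c (C |: t) D.

(* The differential of F(Delta_P), read in multidegrees: the guard q | w of
   bd becomes C \in Rset D, and w / q becomes D / m_{C |: t}. *)
Lemma bdE (k : fieldType) n (P : {set {set 'I_n}}) (c : chain k n) t w :
  isFace P t -> bd P c t w = bdD P c t (madd w (flabel t)).
Proof.
move=> tF; rewrite /bd tF /bdD big_mkcond [RHS]big_mkcond; apply: eq_bigr => C _.
have guardE : mono_dvd (mono_div (flabel (C |: t)) (flabel t)) w =
              (C \in Rset (madd w (flabel t))).
  by rewrite dvd_div_madd flabel_dvd subUset sub1set face_dvd_degree andbT.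
rewrite inE guardE; case: (C \in P); case: (C \notin t); case: (isFace P (C |: t));
  case CR: (C \in Rset _); rewrite ?andbF ?mulr0 //=.
rewrite /coef div_div ?guardE //.
exact: flabel_mono (subsetUr _ _).
Qed.

Section Homotopy.
Variables (k : fieldType) (n : nat) (P : {set {set 'I_n}}) (i : nat) (c : chain k n).
Hypothesis icP : intersection_closed P.
Hypothesis c_cycle : forall t w, bd P c t w = 0.
Implicit Types (s : {set {set 'I_n}}) (D : mono n).

Definition dch : chain k n := fun s u =>
  let D := madd u (flabel s) in
  if isFace P s && (#|s| == i.+2)%N && (Mmin P D \in s)
  then coef c (s :\ Mmin P D) D else 0.

Lemma coef_dch s D : s \subset Rset D ->
  coef dch s D = if isFace P s && (#|s| == i.+2)%N && (Mmin P D \in s)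
                 then coef c (s :\ Mmin P D) D else 0.
Proof. by rewrite -flabel_dvd => sD; rewrite /coef /dch madd_divK. Qed.

(* h c is a finitely supported chain on (i+1)-faces: its support is the image
   of that of c under (s, u) |-> (M_D |: s, D / m_{M_D |: s}). *)
Lemma dch_supp (l : seq ({set {set 'I_n}} * mono n)) :
  (forall s u, c s u != 0 -> (s, u) \in l) -> inF P i.+1 dch.
Proof.
move=> cfin; split.
  by move=> s u; rewrite /dch; case: ifP => [/andP[/andP[-> ->]] //|]; rewrite eqxx.
exists [seq (let D := madd p.2 (flabel p.1) in
             (Mmin P D |: p.1, mono_div D (flabel (Mmin P D |: p.1)))) | p <- l].
move=> s u; rewrite /dch; set D := madd u (flabel s); set M := Mmin P D.
case: ifP => [/andP[_ Ms] cne|]; last by rewrite eqxx.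
apply/mapP; exists (s :\ M, mono_div D (flabel (s :\ M))); first exact: cfin.
rewrite /= madd_divK; last by rewrite flabel_dvd (subset_trans (subD1set s M)) ?face_dvd_degree.
by rewrite -/M setD1K // /D div_maddK.
Qed.

Variables (D : mono n) (t : {set {set 'I_n}}).
Hypotheses (tF : isFace P t) (t_card : #|t| = i.+1) (tR : t \subset Rset D).
Let M := Mmin P D.

Lemma t_sub_Q : t \subset Qset P D.
Proof. by rewrite subsetI tR andbT; case/faceP: tF. Qed.

Lemma add_vertex_degree C : C \in Qset P D -> C |: t \subset Rset D.
Proof. by case/setIP => _ CR; rewrite subUset sub1set CR tR. Qed.

Lemma apex_in_Q : M \in Qset P D.
Proof.
have /card_gt0P[A0 A0t] : (0 < #|t|)%N by rewrite t_card.
exact: Mmin_in icP (subsetP t_sub_Q _ A0t).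
Qed.

Lemma apex_P : M \in P.
Proof. by case/setIP: apex_in_Q. Qed.

Lemma apex_below B : B \in t -> M \subset B.
Proof. by move=> Bt; apply: Mmin_sub; exact: subsetP t_sub_Q _ Bt. Qed.

(* If M_D is not a vertex of t, only the face M_D |: t contributes. *)
Lemma homotopy_apex_out : M \notin t -> bdD P dch t D = coef c t D.
Proof.
move=> Mt; rewrite /bdD (bigD1 M) /=; last first.
  by rewrite apex_in_Q Mt face_cone // ?apex_P //; exact: apex_below.
have MtR := add_vertex_degree apex_in_Q.
rewrite big1 ?addr0 => [|C /andP[/andP[/andP[CQ Ct] _] CM]]; last first.
  rewrite coef_dch ?add_vertex_degree //.
  by rewrite in_setU1 (eq_sym M) (negbTE CM) (negbTE Mt) andbF mulr0.
rewrite sgn_apex; last exact: apex_below.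
rewrite mul1r coef_dch // face_cone ?apex_P //; last exact: apex_below.
by rewrite -/M tF cardsU1 Mt t_card add1n eqxx setU11 (setU1K Mt).
Qed.

(* If M_D is a vertex of t, the cycle condition at t \ M_D expresses the
   coefficient of e_t through the faces C |: (t \ M_D), which are exactly the
   faces hit by d h at t, with opposite signs. *)
Lemma homotopy_apex_in : M \in t -> bdD P dch t D = coef c t D.
Proof.
move=> Mt; set t' := t :\ M.
have tt' : t = M |: t' by rewrite /t' setD1K.
have t'R : t' \subset Rset D := subset_trans (subD1set t M) tR.
have t'F : isFace P t' := face_sub (subD1set t M) tF.
have cyc' : bdD P c t' D = 0.
  have := c_cycle t' (mono_div D (flabel t')).
  by rewrite bdE // madd_divK // flabel_dvd.
move: cyc'; rewrite /bdD (bigD1 M) /=; last by rewrite apex_in_Q setD11 -tt' tF.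
rewrite sgn_apex => [|B /setD1P[_]]; last exact: apex_below.
rewrite mul1r -tt' => /eqP; rewrite addr_eq0 => /eqP ->.
rewrite -sumrN; apply: eq_big => [C | C /andP[/andP[CQ Ct] CtF]].
  have -> : (C \in t') = (C != M) && (C \in t) by rewrite in_setD1.
  case: (eqVneq C M) => [->|CM]; first by rewrite Mt /= !andbF.
  rewrite /= andbT; case CQ: (C \in Qset P D) => //=; case: (C \in t) => //=.
  rewrite tt' setUCA face_cone ?apex_P // => B.
  by rewrite in_setU1 => /predU1P[->|/setD1P[_]]; [exact: Mmin_sub | exact: apex_below].
have CM : C != M by apply: contraNneq Ct => ->.
have MC : M \proper C by rewrite properEneq eq_sym CM Mmin_sub.
rewrite (sgn_remove_apex _ Mt MC) mulNr coef_dch ?add_vertex_degree // CtF cardsU1 (negbTE Ct) t_card.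
rewrite -/M in_setU1 Mt orbT add1n eqxx /=; congr (- (_ * coef c _ D)).
by apply/setP => B; rewrite /t' !inE; case: (eqVneq B M) => [->|_] //=; rewrite eq_sym (negbTE CM).
Qed.

End Homotopy.


Theorem mainTheorem4 (k : fieldType) (n : nat) (P : {set {set 'I_n}}) :
  P != set0 -> intersection_closed P ->
  forall (i : nat) (c : chain k n),
    inF P i c -> (forall t w, bd P c t w = 0) ->
    exists d : chain k n, inF P i.+1 d /\ (forall t w, bd P d t w = c t w).
Proof.
move=> _ icP i c [c_supp [l cfin]] c_cycle.
exists (dch P i c); split; first exact: dch_supp cfin.
move=> t w; case tF: (isFace P t); last first.
  by rewrite /bd tF; case: (eqVneq (c t w) 0) => // /c_supp; rewrite tF.
rewrite bdE //; set D := madd w (flabel t).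
have cE : c t w = coef c t D by rewrite /coef /D div_maddK.
case t_card: (#|t| == i.+1)%N; last first.
  case: (eqVneq (c t w) 0) => [->|/c_supp]; last by rewrite t_card andbF.
  rewrite /bdD big1 // => C /andP[/andP[_ Ct] _].
  by rewrite /coef /dch cardsU1 Ct add1n eqSS t_card andbF mulr0.
have tR : t \subset Rset D by exact: face_dvd_degree.
move/eqP: t_card => t_card; rewrite cE.
case: (boolP (Mmin P D \in t)).
- exact: homotopy_apex_in.
- exact: homotopy_apex_out.
Qed.
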